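(* Let $G=(V,E)$ be a connected undirected graph on $n$ nodes with Laplacian $L$, let $\kappa_1,\dots,\kappa_n>0$, and let $D_\kappa=\mathrm{diag}(\kappa_1,\dots,\kappa_n)$. For $S\subseteq V$ let $D_S$ be the diagonal $0/1$ matrix with $(D_S)_{ii}=1$ iff $i\in S$, and set $Q_S=L+D_\kappa D_S$ (write $Q_v$ for $Q_{\{v\}}$). Define $f:2^V\to\mathbb{R}$ by $f(\emptyset)=0$ and $f(S)=C-\mathrm{tr}(Q_S^{-1})$ for $S\neq\emptyset$, where $C=2\max_{v\in V}\mathrm{tr}(Q_v^{-1})$. Then $f$ is non-decreasing: for all $S_1\subseteq S_2\subseteq V$, $f(S_1)\le f(S_2)$.
   Context: For nonempty $S$, the matrix $Q_S$ is positive definite, so $Q_S^{-1}$ exists. A set function $f$ is non-decreasing if $A\subseteq B$ implies $f(A)\le f(B)$. *)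

From HB Require Import structures.
From mathcomp Require Import all_boot all_order all_algebra.
Set Implicit Arguments. Unset Strict Implicit. Unset Printing Implicit Defensive.
Import Order.TTheory GRing.Theory Num.Theory.
Local Open Scope ring_scope.

Section Defs.
Variables (R : realFieldType) (n : nat).

Definition simple_graph (adj : rel 'I_n) : Prop :=
  symmetric adj /\ irreflexive adj.

Definition connected_graph (adj : rel 'I_n) : Prop :=
  forall i j : 'I_n, connect adj i j.

Definition laplacian (adj : rel 'I_n) : 'M[R]_n :=
  \matrix_(i, j) (if i == j then (#|[set k | adj i k]|)%:R
                  else - (adj i j)%:R).

Definition indicator_mx (S : {set 'I_n}) : 'M[R]_n :=
  diag_mx (\row_i (i \in S)%:R).

Definition kappa_mx (kappa : 'I_n -> R) : 'M[R]_n := diag_mx (\row_i kappa i).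

Definition Qmx (adj : rel 'I_n) (kappa : 'I_n -> R) (S : {set 'I_n}) : 'M[R]_n :=
  laplacian adj + kappa_mx kappa *m indicator_mx S.

(* max_{v in V} tr(Q_v^{-1}); v0 is any vertex, used only as the seed of the fold. *)
Definition maxR : R -> R -> R := Num.max.

Definition max_trinv (adj : rel 'I_n) (kappa : 'I_n -> R) (v0 : 'I_n) : R :=
  \big[maxR/(\tr (invmx (Qmx adj kappa [set v0])))]_(v : 'I_n)
     \tr (invmx (Qmx adj kappa [set v])).

Definition fset_fun (adj : rel 'I_n) (kappa : 'I_n -> R) (v0 : 'I_n)
    (S : {set 'I_n}) : R :=
  if S == set0 then 0
  else 2 * max_trinv adj kappa v0 - \tr (invmx (Qmx adj kappa S)).

End Defs.

From HB Require Import structures.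
From mathcomp Require Import all_boot all_order all_algebra.
From mathcomp Require Import ring lra.
Set Implicit Arguments. Unset Strict Implicit. Unset Printing Implicit Defensive.
Import Order.TTheory GRing.Theory Num.Theory.
Local Open Scope ring_scope.

(* The quadratic form of Q_S is (1/2) sum_ij a_ij (u_i - u_j)^2 + sum_(i in S) kappa_i u_i^2,
   so Q_S is positive semidefinite, and definite when S is nonempty: a kernel vector is
   constant along edges, hence on the connected graph, and vanishes on S.  Adding a vertex t
   to S adds the rank-one term kappa_t e_t^T e_t, which by the Sherman-Morrison formula
   lowers tr Q_S^-1 by kappa_t |Q_S^-1 e_t|^2 / (1 + kappa_t (Q_S^-1)_tt) >= 0.  So
   S |-> tr Q_S^-1 is nonincreasing on nonempty sets, and f(S) >= C/2 >= 0 = f(set0). *)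

Section SetFunction.
Variables (R : numDomainType) (T : finType) (P : pred {set T}) (g : {set T} -> R).
Hypothesis P_setU1 : forall S t, P S -> P (t |: S).
Hypothesis g_setU1 : forall S t, P S -> t \notin S -> g (t |: S) <= g S.

Lemma le_set_fun_subset (S1 S2 : {set T}) : P S1 -> S1 \subset S2 -> g S2 <= g S1.
Proof.
move=> PS1 /setUidPr <-.
suff grow (s : seq T) : P (S1 :|: [set:: s]) /\ g (S1 :|: [set:: s]) <= g S1.
  by have [] := grow (enum S2); rewrite set_enum.
elim: s => [|t s [Ps les]]; first by rewrite set_nil setU0.
rewrite set_cons setUCA; split; first exact: P_setU1.
have [tS|tS] := boolP (t \in S1 :|: [set:: s]).
  by rewrite (setUidPr _) // sub1set.
exact: le_trans (g_setU1 Ps tS) les.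
Qed.

End SetFunction.

Section PsdMatrix.
Variables (R : realFieldType) (n : nat).

Definition psdmx (A : 'M[R]_n) := forall u : 'rV_n, 0 <= (u *m A *m u^T) 0 0.

Lemma psdmx_gram m (X : 'M[R]_(m, n)) : psdmx (X^T *m X).
Proof.
move=> u; rewrite mulmxA -mulmxA -[X *m u^T]trmxK trmx_mul trmxK mxE.
by apply: sumr_ge0 => i _; rewrite !mxE -expr2 sqr_ge0.
Qed.

Lemma mxtrace_psd_ge0 A : psdmx A -> 0 <= \tr A.
Proof.
move=> A_psd; apply: sumr_ge0 => i _.
by have := A_psd (delta_mx 0 i); rewrite -rowE trmx_delta -colE !mxE.
Qed.

(* [invmx] is the identity on singular matrices, so no invertibility is assumed. *)
Lemma psdmx_invmx Q : Q^T = Q -> psdmx Q -> psdmx (invmx Q).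
Proof.
move=> Q_sym Q_psd u; have [Q_unit | /invmx_out -> //] := boolP (Q \in unitmx).
by have := Q_psd (u *m invmx Q); rewrite mulmxKV // trmx_mul trmx_inv Q_sym mulmxA.
Qed.

Lemma unitmx_qform_definite A :
  (forall u : 'rV[R]_n, (u *m A *m u^T) 0 0 = 0 -> u = 0) -> A \in unitmx.
Proof.
move=> A_def; rewrite unitmxE unitfE; apply/negP => /det0P [v /negP v_neq0 vA].
by apply: v_neq0; apply/eqP/A_def; rewrite vA mul0mx mxE.
Qed.

End PsdMatrix.

Lemma invmx_rank1_update (R : comUnitRingType) n (Q : 'M[R]_n) (u v : 'rV[R]_n) :
  Q \in unitmx -> 1 + (v *m invmx Q *m u^T) 0 0 \is a GRing.unit ->
  invmx (Q + u^T *m v) =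
    invmx Q - (1 + (v *m invmx Q *m u^T) 0 0)^-1 *: (invmx Q *m u^T *m v *m invmx Q).
Proof.
set s := (v *m invmx Q *m u^T) 0 0 => Q_unit s_unit.
set M := _ - _.
suff AM : (Q + u^T *m v) *m M = 1%:M.
  have [A_unit _] := mulmx1_unit AM.
  by rewrite -[LHS]mulmx1 -AM mulmxA mulVmx ?mul1mx.
set N := u^T *m v *m invmx Q.
have NN : u^T *m v *m (invmx Q *m u^T *m v *m invmx Q) = s *: N.
  transitivity (u^T *m (v *m invmx Q *m u^T) *m (v *m invmx Q)); first by rewrite !mulmxA.
  by rewrite [v *m _ *m _]mx11_scalar mul_mx_scalar -scalemxAl mulmxA.
rewrite /M mulmxDl !mulmxBr -!scalemxAr NN !mulmxA mulmxV // mul1mx -/N.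
have -> : 1%:M - (1 + s)^-1 *: N + (N - (1 + s)^-1 *: (s *: N)) =
          1%:M + (1 - (1 + s)^-1 * (1 + s)) *: N.
  by apply/matrixP => i j; rewrite !mxE; ring.
by rewrite mulVr // subrr scale0r addr0.
Qed.

Lemma mxtrace_invmx_rank1_update_le (R : realFieldType) n (Q : 'M[R]_n) (e : 'rV_n) c :
  Q^T = Q -> Q \in unitmx -> psdmx Q -> 0 <= c ->
  \tr (invmx (Q + c *: (e^T *m e))) <= \tr (invmx Q).
Proof.
move=> Q_sym Q_unit Q_psd c_ge0.
have s_ge0 : 0 <= (e *m invmx Q *m e^T) 0 0 := psdmx_invmx Q_sym Q_psd e.
have -> : c *: (e^T *m e) = (c *: e)^T *m e by rewrite linearZ scalemxAl.
have s'E : (e *m invmx Q *m (c *: e)^T) 0 0 = c * (e *m invmx Q *m e^T) 0 0.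
  by rewrite linearZ -scalemxAr mxE.
have s'_gt0 : 0 < 1 + (e *m invmx Q *m (c *: e)^T) 0 0.
  by rewrite s'E ltr_pwDl // mulr_ge0.
rewrite invmx_rank1_update ?unitfE ?lt0r_neq0 //.
rewrite mxtraceD raddfN /= mxtraceZ gerDl oppr_le0.
have -> : invmx Q *m (c *: e)^T *m e *m invmx Q = c *: ((e *m invmx Q)^T *m (e *m invmx Q)).
  by rewrite linearZ -scalemxAr -!scalemxAl trmx_mul trmx_inv Q_sym !mulmxA.
rewrite mxtraceZ !mulr_ge0 ?invr_ge0 ?(ltW s'_gt0) ?mxtrace_psd_ge0 //.
exact: psdmx_gram.
Qed.

Lemma diag_mx_qform (R : comPzRingType) n (d u : 'rV[R]_n) :
  (u *m diag_mx d *m u^T) 0 0 = \sum_i d 0 i * u 0 i ^+ 2.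
Proof. by rewrite mul_mx_diag mxE; apply: eq_bigr => i _; rewrite !mxE; ring. Qed.

Section GraphQmx.
Variables (R : realFieldType) (n : nat) (adj : rel 'I_n) (kappa : 'I_n -> R).
Hypotheses (adj_sym : symmetric adj) (adj_irr : irreflexive adj).
Hypothesis kappa_gt0 : forall i, 0 < kappa i.

Let deg i : R := \sum_k (adj i k)%:R.

Lemma laplacianE :
  laplacian R adj = diag_mx (\row_i deg i) - \matrix_(i, j) (adj i j)%:R.
Proof.
apply/matrixP => i j; rewrite !mxE.
have [<-|_] := eqVneq i j; last by rewrite mulr0n sub0r.
rewrite adj_irr subr0 mulr1n -sum1_card natr_sum big_mkcond /=.
by apply: eq_bigr => k _; rewrite inE; case: (adj i k).
Qed.

Lemma laplacian_mul_col (u : 'rV[R]_n) i :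
  (laplacian R adj *m u^T) i 0 = \sum_j (adj i j)%:R * (u 0 i - u 0 j).
Proof.
rewrite laplacianE mulmxBl mul_diag_mx !mxE mulr_suml -sumrB.
by apply: eq_bigr => j _; rewrite !mxE mulrBr mulrC.
Qed.

Lemma laplacian_qform (u : 'rV[R]_n) :
  2 * (u *m laplacian R adj *m u^T) 0 0 = \sum_i \sum_j (adj i j)%:R * (u 0 i - u 0 j) ^+ 2.
Proof.
set F := fun i j => (adj i j)%:R * (u 0 i - u 0 j) * u 0 i.
have -> : \sum_i \sum_j (adj i j)%:R * (u 0 i - u 0 j) ^+ 2 =
          \sum_i \sum_j F i j + \sum_i \sum_j F j i.
  rewrite -big_split; apply: eq_bigr => i _; rewrite -big_split /=.
  by apply: eq_bigr => j _; rewrite /F adj_sym; ring.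
rewrite [X in _ + X]exchange_big -mulr2n -[RHS]mulr_natl -mulmxA mxE; congr (_ * _).
apply: eq_bigr => i _; rewrite laplacian_mul_col mulr_sumr.
by apply: eq_bigr => j _; rewrite /F; ring.
Qed.

Lemma kappa_indicator_mx S :
  kappa_mx kappa *m indicator_mx R S = diag_mx (\row_i (kappa i * (i \in S)%:R)).
Proof. by rewrite mulmx_diag; congr diag_mx; apply/rowP => i; rewrite !mxE. Qed.

Lemma trmx_Qmx S : (Qmx adj kappa S)^T = Qmx adj kappa S.
Proof.
rewrite /Qmx linearD /= laplacianE linearB /= kappa_indicator_mx !tr_diag_mx.
by congr (_ - _ + _); apply/matrixP => i j; rewrite !mxE adj_sym.
Qed.

Lemma Qmx_qform S (u : 'rV[R]_n) :
  2 * (u *m Qmx adj kappa S *m u^T) 0 0 =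
  \sum_i \sum_j (adj i j)%:R * (u 0 i - u 0 j) ^+ 2 +
  2 * \sum_i kappa i * (i \in S)%:R * u 0 i ^+ 2.
Proof.
rewrite /Qmx mulmxDr mulmxDl mxE mulrDr laplacian_qform kappa_indicator_mx.
by rewrite diag_mx_qform; congr (_ + 2 * _); apply: eq_bigr => i _; rewrite mxE.
Qed.

Let edge_term_ge0 (u : 'rV[R]_n) i j : 0 <= (adj i j)%:R * (u 0 i - u 0 j) ^+ 2.
Proof. by rewrite mulr_ge0 ?ler0n ?sqr_ge0. Qed.

Let kappa_term_ge0 (S : {set 'I_n}) (u : 'rV[R]_n) i :
  0 <= kappa i * (i \in S)%:R * u 0 i ^+ 2.
Proof. by rewrite mulr_ge0 ?sqr_ge0 // mulr_ge0 ?ler0n // ltW. Qed.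

Lemma Qmx_psd S : psdmx (Qmx adj kappa S).
Proof.
move=> u; rewrite -(@pmulr_rge0 _ 2) // Qmx_qform addr_ge0 ?mulr_ge0 //.
  by apply: sumr_ge0 => i _; apply: sumr_ge0.
by apply: sumr_ge0.
Qed.

Lemma Qmx_unit S : connected_graph adj -> S != set0 -> Qmx adj kappa S \in unitmx.
Proof.
move=> adj_conn /set0Pn [s sS]; apply: unitmx_qform_definite => u qu0.
move/eqP: (Qmx_qform S u); rewrite qu0 mulr0 eq_sym paddr_eq0 ?mulr_ge0 //; first last.
- by apply: sumr_ge0.
- by apply: sumr_ge0 => i _; apply: sumr_ge0.
rewrite mulf_eq0 pnatr_eq0 /= => /andP [/eqP edges0 /eqP S0].
have u_edge i j : adj i j -> u 0 i = u 0 j.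
  move=> aij.
  have row_i0 := psumr_eq0P (fun k _ => sumr_ge0 _ (fun l _ => edge_term_ge0 u k l))
    edges0 (i := i) isT.
  have := psumr_eq0P (fun k _ => edge_term_ge0 u i k) row_i0 (i := j) isT.
  by rewrite aij mul1r => /eqP; rewrite sqrf_eq0 subr_eq0 => /eqP.
have u_S i : i \in S -> u 0 i = 0.
  move=> iS; have := psumr_eq0P (fun k _ => kappa_term_ge0 S u k) S0 (i := i) isT.
  by rewrite iS mulr1 => /eqP; rewrite mulf_eq0 gt_eqF //= sqrf_eq0 => /eqP.
have u0_closed : closed adj [pred k | u 0 k == 0].
  by move=> i j /u_edge; rewrite !inE => ->.
apply/rowP => i; rewrite mxE.
by have := closed_connect u0_closed (adj_conn s i); rewrite !inE u_S // eqxx => /esym/eqP.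
Qed.

Lemma Qmx_setU1 (S : {set 'I_n}) t : t \notin S ->
  Qmx adj kappa (t |: S) =
  Qmx adj kappa S + kappa t *: ((delta_mx 0 t : 'rV[R]_n)^T *m delta_mx 0 t).
Proof.
move=> tS; rewrite /Qmx -addrA !kappa_indicator_mx trmx_delta mul_delta_mx.
congr (_ + _); apply/matrixP => i j; rewrite !mxE in_setU1.
have [<-|ij] := eqVneq i j; last first.
  rewrite !mulr0n add0r; have [it|] := eqVneq i t; last by rewrite mulr0.
  by rewrite -it eq_sym (negbTE ij) mulr0.
rewrite !mulr1n andbb; have [->|_] := eqVneq i t; last by rewrite mulr0 addr0.
by rewrite (negbTE tS) mulr0 add0r.
Qed.

Lemma mxtrace_invmx_Qmx_ge0 (S : {set 'I_n}) : 0 <= \tr (invmx (Qmx adj kappa S)).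
Proof. exact: mxtrace_psd_ge0 (psdmx_invmx (trmx_Qmx S) (Qmx_psd S)). Qed.

Lemma mxtrace_invmx_Qmx_subset (S1 S2 : {set 'I_n}) : connected_graph adj ->
  S1 != set0 -> S1 \subset S2 ->
  \tr (invmx (Qmx adj kappa S2)) <= \tr (invmx (Qmx adj kappa S1)).
Proof.
move=> adj_conn; apply: (le_set_fun_subset (P := fun S => S != set0)
  (g := fun S => \tr (invmx (Qmx adj kappa S)))).
  by move=> S t _; apply/set0Pn; exists t; rewrite setU11.
move=> S t S_neq0 tS; rewrite Qmx_setU1 //.
by apply: mxtrace_invmx_rank1_update_le;
  [exact: trmx_Qmx | exact: Qmx_unit | exact: Qmx_psd | exact: ltW].
Qed.

End GraphQmx.

Theorem proposition1 (R : realFieldType) (n : nat) (hn : (0 < n)%N)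
    (adj : rel 'I_n) (kappa : 'I_n -> R) :
  simple_graph adj ->
  connected_graph adj ->
  (forall i, 0 < kappa i) ->
  forall S1 S2 : {set 'I_n}, S1 \subset S2 ->
    fset_fun adj kappa (Ordinal hn) S1 <= fset_fun adj kappa (Ordinal hn) S2.
Proof.
move=> [adj_sym adj_irr] adj_conn kappa_gt0 S1 S2 sub12.
have trQ_anti := mxtrace_invmx_Qmx_subset adj_sym adj_irr kappa_gt0 adj_conn.
have trQ_ge0 := mxtrace_invmx_Qmx_ge0 adj_sym adj_irr kappa_gt0.
set M := max_trinv adj kappa (Ordinal hn).
have trQ1_le_M v : \tr (invmx (Qmx adj kappa [set v])) <= M := le_bigmax _ _ _.
have M_ge0 : 0 <= M := le_trans (trQ_ge0 _) (trQ1_le_M (Ordinal hn)).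
rewrite /fset_fun -/M; have [_|S1_neq0] := eqVneq S1 set0.
  case: ifP => // /negbT /set0Pn [v vS2].
  have v_neq0 : [set v] != set0 by apply/set0Pn; exists v; rewrite set11.
  have v_sub : [set v] \subset S2 by rewrite sub1set.
  have := trQ_anti _ _ v_neq0 v_sub; have := trQ1_le_M v; lra.
have S2_neq0 : S2 != set0 by apply: contraNneq S1_neq0 => S2_0; rewrite -subset0 -S2_0.
by rewrite (negbTE S2_neq0) lerD2l lerN2 trQ_anti.
Qed.
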